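(* Consider the randomized instance described in the context. For any $\delta\in(0,1)$, $\Delta\in(0,m)$ and $\gamma\in(0,0.5]$ satisfying $2\sqrt{\log(2/\delta)\cdot m}\le\frac m2$ and $\frac{4(\Delta+1)}{m}\le\frac12$, under the choice $\epsilon=\frac{2(\Delta+1)}{m-2\sqrt{\log(2/\delta)\cdot m}}$, it holds with probability at least $1-\delta$ (over $X_1,\dots,X_m$) that $\mathrm{OptEnvy}\le-\Delta$.
   Context: Two agents $a,b$, $m$ items ($m$ a multiple of 4), additive utilities. An allocation is a partition $(\mathcal{A}_a,\mathcal{A}_b)$ of $[m]$; $\mathrm{Envy}_{a\to b}=\sum_{i\in\mathcal{A}_b}\mu^a_i-\sum_{i\in\mathcal{A}_a}\mu^a_i$, $\mathrm{Envy}_{b\to a}=\sum_{i\in\mathcal{A}_a}\mu^b_i-\sum_{i\in\mathcal{A}_b}\mu^b_i$, $\mathrm{Envy}=\max$ of the two, $\mathrm{OptEnvy}=\min$ of $\mathrm{Envy}$ over all allocations. Randomized instance: $X_1,\dots,X_m$ i.i.d. $\mathrm{Bernoulli}(1/2)$; for $i\le m/2$: if $X_i=1$ then $\mu^a_i=\frac12+\epsilon,\mu^b_i=\frac12-\epsilon$, if $X_i=0$ then $\mu^a_i=\frac12-\epsilon,\mu^b_i=\frac12+\epsilon$; for $i>m/2$: if $X_i=1$ then $\mu^a_i=\mu^b_i=\frac12+\gamma$, if $X_i=0$ then $\mu^a_i=\mu^b_i=\frac12-\gamma$. $\log$ is natural. *)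

From HB Require Import structures.
From mathcomp Require Import all_boot all_order all_algebra.
From mathcomp Require Import all_classical all_reals all_analysis.
Set Implicit Arguments. Unset Strict Implicit. Unset Printing Implicit Defensive.
Import Order.TTheory GRing.Theory Num.Theory.
Local Open Scope ring_scope.

(* Items are indexed by 'I_m (0-based): paper's item i (1-based) is (i-1).
   Paper's "i <= m/2" becomes (val i < m %/ 2). *)

Definition mu_a (R : realType) (m : nat) (eps gam : R) (X : {ffun 'I_m -> bool})
  (i : 'I_m) : R :=
  if (val i < m %/ 2)%N then (if X i then 1/2 + eps else 1/2 - eps)
  else (if X i then 1/2 + gam else 1/2 - gam).

Definition mu_b (R : realType) (m : nat) (eps gam : R) (X : {ffun 'I_m -> bool})
  (i : 'I_m) : R :=
  if (val i < m %/ 2)%N then (if X i then 1/2 - eps else 1/2 + eps)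
  else (if X i then 1/2 + gam else 1/2 - gam).

(* An allocation is given by the bundle A of agent a; agent b gets ~: A. *)
Definition envy_ab (R : realType) (m : nat) (eps gam : R) (X : {ffun 'I_m -> bool})
  (A : {set 'I_m}) : R :=
  \sum_(i in ~: A) mu_a eps gam X i - \sum_(i in A) mu_a eps gam X i.

Definition envy_ba (R : realType) (m : nat) (eps gam : R) (X : {ffun 'I_m -> bool})
  (A : {set 'I_m}) : R :=
  \sum_(i in A) mu_b eps gam X i - \sum_(i in ~: A) mu_b eps gam X i.

Definition envy (R : realType) (m : nat) (eps gam : R) (X : {ffun 'I_m -> bool})
  (A : {set 'I_m}) : R :=
  Num.max (envy_ab eps gam X A) (envy_ba eps gam X A).

Definition opt_envy (R : realType) (m : nat) (eps gam : R) (X : {ffun 'I_m -> bool}) : R :=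
  \big[Num.min/envy eps gam X (finset.set0)]_(A : {set 'I_m}) envy eps gam X A.

(* Probability of an event over X_1..X_m i.i.d. Bernoulli(1/2), i.e. the
   uniform distribution on {ffun 'I_m -> bool}. *)
Definition prob_unif (R : realType) (m : nat) (E : pred {ffun 'I_m -> bool}) : R :=
  (#|[set X | E X]|)%:R / (2 ^ m)%:R.

From HB Require Import structures.
From mathcomp Require Import all_boot all_order all_algebra.
From mathcomp Require Import all_classical all_reals all_analysis.
From mathcomp Require Import ring lra zify.
Import Order.TTheory GRing.Theory Num.Theory.
Local Open Scope ring_scope.

(* Let S(X) be the excess of first-half items that agent a prefers over those
   that agent b prefers.  Agent a receives half of the first-half items, as many
   as possible among those it prefers, which makes both envies equal to
   -eps (m/2 - |S(X)|) up to the discrepancy on the common-value items; a greedy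
   choice of signs keeps that discrepancy within 1.  By the Chernoff bound with
   cosh x <= exp (x^2/2), |S(X)| <= sqrt (m log (2/delta)) outside an event of
   probability at most delta, and the value of eps turns 1 - eps (m/2 - |S(X)|)
   into -Delta. *)

Lemma cards_sepID (T : finType) (A : {set T}) (b : T -> bool) :
  (#|[set i in A | b i]| + #|[set i in A | ~~ b i]|)%N = #|A|.
Proof.
rewrite -(cardsID [set i | b i] A); congr (_ + _)%N; apply: eq_card => i.
  by rewrite !inE.
by rewrite !inE andbC.
Qed.

Lemma exists_subset_card (T : finType) (A : {set T}) k : (k <= #|A|)%N ->
  exists2 B : {set T}, B \subset A & #|B| = k.
Proof.
rewrite -bin_gt0 -cards_draws => /card_gt0P[B].
by rewrite inE => /andP[BA /eqP cardB]; exists B.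
Qed.

Lemma card_ord_lt m n : (n <= m)%N -> #|[set i : 'I_m | (i < n)%N]| = n.
Proof.
move=> le_nm; rewrite -sum1_card (eq_bigl (fun i : 'I_m => (i < n)%N)) => [|i]; last by rewrite inE.
by rewrite -(big_ord_widen _ (fun=> 1%N) le_nm) sum1_card card_ord.
Qed.

Lemma norm_add_le_of_mul_le0 (R : realDomainType) (a b e : R) :
  a * b <= 0 -> `|a| <= e -> `|b| <= e -> `|a + b| <= e.
Proof.
rewrite !ler_norml => ab_le0 /andP[a1 a2] /andP[b1 b2].
by case: (lerP 0 a) => a0; apply/andP; split; nra.
Qed.

Lemma max_addr_subr (R : realDomainType) (a b : R) : Num.max (a + b) (a - b) = a + `|b|.
Proof.
by case: (lerP 0 b) => b0; [rewrite ger0_norm // max_l | rewrite ltr0_norm // max_r]; lra.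
Qed.

Definition spin {R : nzRingType} (b : bool) : R := if b then 1 else -1.

Lemma sum_setC_sub_sum (R : nzRingType) (T : finType) (A : {set T}) (f : T -> R) :
  \sum_(i in ~: A) f i - \sum_(i in A) f i = \sum_i spin (i \notin A) * f i.
Proof.
rewrite [RHS](bigID (mem A)) /= addrC.
congr (_ + _); last by rewrite -sumrN; apply: eq_bigr => i ->; rewrite mulN1r.
by apply: eq_big => [i|i]; rewrite ?inE // => ->; rewrite mul1r.
Qed.

Section Spin.
Context {R : realDomainType}.

Lemma spinN b : spin (~~ b) = - spin b :> R.
Proof. by case: b; rewrite /= ?opprK. Qed.

Lemma spin_mul a b : spin a * spin b = spin (a == b) :> R.
Proof. by case: a; case: b; rewrite /= ?mulr1 ?mulrN1 ?opprK. Qed.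

Lemma sum_spin (T : finType) (A : {set T}) (b : T -> bool) :
  \sum_(i in A) spin (b i) = #|[set i in A | b i]|%:R *+ 2 - #|A|%:R :> R.
Proof.
rewrite (bigID b) /= (eq_bigr (fun=> 1)); last by move=> i /andP[_ ->].
rewrite [X in _ + X](eq_bigr (fun=> -1)); last by move=> i /andP[_ /negbTE ->].
have cardE (c : bool -> bool) : #|[pred i in A | c (b i)]| = #|[set i in A | c (b i)]|.
  by apply: eq_card => i; rewrite !inE.
rewrite !sumr_const (cardE id) (cardE negb) -(cards_sepID _ A b) natrD mulNrn mulr2n.
by rewrite opprD addrA addrK.
Qed.

Lemma exists_spin_sum_le1 (T : finType) (c : T -> R) (r : seq T) :
  uniq r -> {in r, forall i, `|c i| <= 1} ->
  exists C : {set T}, `|\sum_(i <- r) spin (i \notin C) * c i| <= 1.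
Proof.
elim: r => [|x r IH] /=; first by exists [set: T]; rewrite big_nil normr0 ler01.
move=> /andP[x_r r_uniq] c_le1.
have [C C_le1] := IH r_uniq (fun i ir => c_le1 i (mem_behead (s := x :: r) ir)).
set D := \sum_(i <- r) _ in C_le1.
have sum_r (C' : {set T}) : {in r, forall i, (i \in C') = (i \in C)} ->
    \sum_(i <- r) spin (i \notin C') * c i = D.
  by move=> eqC; apply: eq_big_seq => i ir; rewrite eqC.
have cx_le1 := c_le1 x (mem_head x r).
(* Give x the sign that pulls the partial sum D back towards 0. *)
have [Dc_le0|Dc_gt0] := lerP (D * c x) 0.
  exists (C :\ x); rewrite big_cons sum_r; last first.
    by move=> i ir; rewrite !inE (negbTE (memPn x_r i ir)).
  by rewrite !inE eqxx /= mul1r addrC norm_add_le_of_mul_le0.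
exists (x |: C); rewrite big_cons sum_r; last first.
  by move=> i ir; rewrite !inE (negbTE (memPn x_r i ir)).
rewrite !inE eqxx /= mulN1r addrC norm_add_le_of_mul_le0 ?normrN //.
by rewrite mulrN oppr_le0 ltW.
Qed.

End Spin.

Section BalancedSplit.
Context {R : realDomainType} (T : finType) (F : {set T}).
Hypothesis F_even : ~~ odd #|F|.

Let exists_balanced_anticorrelated_le (x : T -> bool) :
  (#|[set i in F | x i]|.*2 <= #|F|)%N ->
  exists Q : {set T}, \sum_(i in F) spin (i \notin Q) = 0 :> R /\
    \sum_(i in F) spin (i \notin Q) * spin (x i) = `|\sum_(i in F) spin (x i)| - #|F|%:R :> R.
Proof.
set P := [set i in F | x i]; set N := [set i in F | ~~ x i] => P_le.
have cardF : #|F| = (#|F|./2).*2 by rewrite -{1}(odd_double_half #|F|) (negbTE F_even).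
set q := #|F|./2 in cardF P_le *.
have cardN : #|N| = (#|F| - #|P|)%N by rewrite -(cards_sepID _ F x) addKn.
have [Bm BmN cardBm] : exists2 Bm : {set T}, Bm \subset N & #|Bm| = (q - #|P|)%N.
  by apply: exists_subset_card; rewrite cardN; lia.
exists (P :|: Bm).
have sepQ : [set i in F | i \notin P :|: Bm] = N :\: Bm.
  by apply/setP => i; rewrite !inE; case: (i \in F); case: (x i); case: (i \in Bm).
have sep_corr : [set i in F | (i \notin P :|: Bm) == x i] = Bm.
  apply/setP => i; rewrite !inE; case Bm_i: (i \in Bm).
    by move/fintype.subsetP: BmN => /(_ i Bm_i); rewrite !inE => /andP[-> /negbTE ->].
  by case: (i \in F); case: (x i).
have cardNB : #|N :\: Bm| = q by rewrite (cardsDS BmN) cardBm cardN; lia.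
rewrite (eq_bigr _ (fun i _ => spin_mul (i \notin P :|: Bm) (x i))) !sum_spin.
rewrite sepQ sep_corr cardNB cardBm.
have P_le_q : (#|P| <= q)%N by rewrite -leq_double -cardF.
have cardFR : #|F|%:R = q%:R * 2 :> R by rewrite cardF -muln2 natrM.
have P_le_qR : #|P|%:R <= q%:R :> R by rewrite ler_nat.
rewrite natrB // cardFR !mulr2n ler0_norm; last by lra.
by split; lra.
Qed.

Lemma exists_balanced_anticorrelated (x : T -> bool) :
  exists Q : {set T}, \sum_(i in F) spin (i \notin Q) = 0 :> R /\
    \sum_(i in F) spin (i \notin Q) * spin (x i) = `|\sum_(i in F) spin (x i)| - #|F|%:R :> R.
Proof.
have [/exists_balanced_anticorrelated_le//|P_gt] := leqP #|[set i in F | x i]|.*2 #|F|.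
have [|Q [Q_bal Q_corr]] := exists_balanced_anticorrelated_le (fun i => ~~ x i).
  by have := cards_sepID _ F x; lia.
have spinC i : spin (i \notin ~: Q) = - spin (i \notin Q) :> R.
  by rewrite inE negbK spinN opprK.
exists (~: Q); split.
  by rewrite (eq_bigr _ (fun i _ => spinC i)) sumrN Q_bal oppr0.
have -> : \sum_(i in F) spin (x i) = - \sum_(i in F) spin (~~ x i) :> R.
  by rewrite -sumrN; apply: eq_bigr => i _; rewrite spinN opprK.
rewrite normrN -Q_corr; apply: eq_bigr => i _.
by rewrite spinC mulNr -mulrN -spinN.
Qed.

End BalancedSplit.

Lemma expn2_fact_le_fact_double j : (2 ^ j * j`! <= (j.*2)`!)%N.
Proof.
elim: j => [//|j IH]; rewrite doubleS !factS expnS.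
rewrite (_ : (2 * 2 ^ j * (j.+1 * j`!) = (2 * j.+1) * (2 ^ j * j`!))%N); last by lia.
apply: leq_mul; first by lia.
by apply: leq_trans IH _; rewrite leq_pmull.
Qed.

Section CoshBound.
Variable R : realType.
Implicit Types x : R.

Let cosh_coeff x n := exp_coeff x n + exp_coeff (- x) n.

Let cosh_coeff_ge0 x n : 0 <= cosh_coeff x n.
Proof.
rewrite /cosh_coeff /exp_coeff /= -mulrDl divr_ge0 // exprNn.
have [odd_n|even_n] := boolP (odd n).
  by rewrite -signr_odd odd_n expr1 mulN1r subrr.
by rewrite -signr_odd (negbTE even_n) expr0 mul1r -mulr2n mulrn_wge0 // exprn_even_ge0.
Qed.

Let cosh_coeff_odd x j : cosh_coeff x j.*2.+1 = 0.
Proof.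
by rewrite /cosh_coeff /exp_coeff /= exprNn -signr_odd /= odd_double expr1 mulN1r mulNr addrN.
Qed.

Let cosh_coeff_even_le x j : cosh_coeff x j.*2 <= 2 * exp_coeff (x ^+ 2 / 2) j.
Proof.
rewrite /cosh_coeff /exp_coeff /= exprNn -signr_odd odd_double expr0 mul1r.
rewrite -mulrDl -mulr2n -[_ *+ 2]mulr_natl -mulrA ler_wpM2l // exprMn -exprM mul2n exprVn.
rewrite -mulrA ler_wpM2l ?exprn_even_ge0 ?odd_double // -invfM.
rewrite lef_pV2 ?posrE ?mulr_gt0 ?exprn_gt0 ?ltr0n ?fact_gt0 //.
by rewrite -natrX -natrM ler_nat expn2_fact_le_fact_double.
Qed.

Let partial_cosh_le x N :
  \sum_(0 <= n < N) cosh_coeff x n <= 2 * \sum_(0 <= j < N) exp_coeff (x ^+ 2 / 2) j.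
Proof.
have double J : \sum_(0 <= n < J.*2) cosh_coeff x n
    <= 2 * \sum_(0 <= j < J) exp_coeff (x ^+ 2 / 2) j.
  elim: J => [|J IH]; first by rewrite !big_geq // mulr0.
  by rewrite doubleS !big_nat_recr //= cosh_coeff_odd addr0 mulrDr lerD ?cosh_coeff_even_le.
apply: le_trans (double N).
by rewrite (@big_cat_nat _ _ _ N 0 N.*2) //= ?lerDl ?sumr_ge0 // -addnn leq_addr.
Qed.

Lemma expR_add_expRN_le x : expR x + expR (- x) <= 2 * expR (x ^+ 2 / 2).
Proof.
have cvg_x := is_cvg_series_exp_coeff x.
have cvg_Nx := is_cvg_series_exp_coeff (- x).
have cvg_sq := is_cvg_series_exp_coeff (x ^+ 2 / 2).
rewrite /expR -limD //; apply: limr_le; first exact: is_cvgD.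
near=> N; rewrite /= -seriesD /series /=.
apply: le_trans (partial_cosh_le x N) _; rewrite ler_wpM2l //.
apply: nondecreasing_cvgn_le => //; apply/nondecreasing_seqP => n.
by rewrite /series /= big_nat_recr //= lerDl exp_coeff_ge0 // divr_ge0 ?sqr_ge0.
Unshelve. all: by end_near.
Qed.

End CoshBound.

Section Hoeffding.
Variables (R : realType) (T : finType) (F : {set T}).

Lemma sum_expR_spin (lam : R) :
  \sum_(X : {ffun T -> bool}) expR (lam * \sum_(i in F) spin (X i))
  = (expR lam + expR (- lam)) ^+ #|F| * 2 ^+ #|~: F|.
Proof.
pose g i (b : bool) := if i \in F then expR (lam * spin b) else 1.
have prod_g (X : {ffun T -> bool}) : expR (lam * \sum_(i in F) spin (X i)) = \prod_i g i (X i).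
  by rewrite mulr_sumr expR_sum big_mkcond.
rewrite (eq_bigr _ (fun X _ => prod_g X)) -bigA_distr_bigA /=.
rewrite (eq_bigr (fun i => if i \in F then expR lam + expR (- lam) else 2)); last first.
  by move=> i _; rewrite big_bool /g /spin; case: ifP; rewrite ?mulr1 ?mulrN1 // addrC.
rewrite (bigID (mem F)) /=; congr (_ * _).
  by rewrite (eq_bigr (fun=> expR lam + expR (- lam))) ?prodr_const // => i ->.
rewrite (eq_bigr (fun=> 2)) => [|i /negbTE ->] //.
by rewrite prodr_const; congr (_ ^+ _); apply: eq_card => i; rewrite !inE.
Qed.

Lemma sum_expR_spin_le (lam : R) :
  \sum_(X : {ffun T -> bool}) expR (lam * \sum_(i in F) spin (X i))
  <= 2 ^+ #|T| * expR (#|F|%:R * (lam ^+ 2 / 2)).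
Proof.
rewrite sum_expR_spin expRM_natl -(cardsC F) exprD -mulrA mulrCA -exprMn.
rewrite mulrC ler_wpM2l ?exprn_ge0 // lerXn2r ?nnegrE ?addr_ge0 ?mulr_ge0 ?expR_ge0 //.
exact: expR_add_expRN_le.
Qed.

Lemma card_large_spin_sum_le (s : R) : 0 <= s -> (0 < #|F|)%N ->
  #|[set X : {ffun T -> bool} | s < `|\sum_(i in F) spin (X i)|]|%:R
  <= 2 * 2 ^+ #|T| * expR (- (s ^+ 2 / (2 * #|F|%:R))).
Proof.
move=> s_ge0 F_gt0; set n : R := #|F|%:R.
pose lam := s / n. (* minimises the Chernoff exponent n lam^2/2 - lam s *)
have n_gt0 : 0 < n by rewrite ltr0n.
have lam_ge0 : 0 <= lam := divr_ge0 s_ge0 (ltW n_gt0).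
pose S (X : {ffun T -> bool}) : R := \sum_(i in F) spin (X i).
have markov : #|[set X : {ffun T -> bool} | s < `|S X|]|%:R * expR (lam * s)
    <= \sum_X (expR (lam * S X) + expR (- lam * S X)).
  rewrite mulr_natl -sumr_const big_mkcond /=; apply: ler_sum => X _.
  rewrite inE; case: ifP => [/ltW s_le|_]; last by rewrite addr_ge0 ?expR_ge0.
  apply: le_trans (_ : expR `|lam * S X| <= _).
    by rewrite ler_expR normrM (ger0_norm lam_ge0) ler_wpM2l.
  rewrite mulNr; case: (ger0P (lam * S X)) => _; rewrite ?opprK.
    by rewrite lerDl expR_ge0.
  by rewrite lerDr expR_ge0.
have exponent : n * (lam ^+ 2 / 2) - lam * s = - (s ^+ 2 / (2 * n)).
  by rewrite /lam; field; rewrite gt_eqF.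
rewrite -exponent expRB mulrA ler_pdivlMr ?expR_gt0 //; apply: le_trans markov _.
rewrite big_split /= mulr2n -mulrA mulrDl mul1r lerD ?sum_expR_spin_le //.
by rewrite -(sqrrN lam) sum_expR_spin_le.
Qed.

End Hoeffding.

Section Envy.
Variables (R : realType) (m : nat) (eps gam : R) (X : {ffun 'I_m -> bool}).
Let F := [set i : 'I_m | (i < m %/ 2)%N].

Lemma mu_aE i : mu_a eps gam X i =
  if i \in F then 1/2 + eps * spin (X i) else 1/2 + gam * spin (X i).
Proof. by rewrite /mu_a inE; case: ifP; case: (X i); rewrite /= ?mulr1 ?mulrN1. Qed.

Lemma mu_bE i : mu_b eps gam X i =
  if i \in F then 1/2 - eps * spin (X i) else 1/2 + gam * spin (X i).
Proof. by rewrite /mu_b inE; case: ifP; case: (X i); rewrite /= ?mulr1 ?mulrN1 ?opprK. Qed.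

Lemma envy_balanced (A : {set 'I_m}) : \sum_(i in F) spin (i \notin A) = 0 :> R ->
  envy eps gam X A = eps * \sum_(i in F) spin (i \notin A) * spin (X i)
    + `|\sum_(i in ~: F) spin (i \notin A) * (1/2 + gam * spin (X i))|.
Proof.
move=> balanced.
have splitF (f : 'I_m -> R) : \sum_i f i = \sum_(i in F) f i + \sum_(i in ~: F) f i.
  rewrite (bigID (mem F)) /=; congr (_ + _).
  by apply: eq_bigl => i; rewrite !inE.
have sumF (c : R) : \sum_(i in F) spin (i \notin A) * (1/2 + c * spin (X i))
    = c * \sum_(i in F) spin (i \notin A) * spin (X i).
  rewrite mulr_sumr (eq_bigr (fun i => spin (i \notin A) / 2 + c * (spin (i \notin A) * spin (X i)))).
    by rewrite big_split /= -mulr_suml balanced mul0r add0r.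
  by move=> i _; ring.
rewrite /envy /envy_ab /envy_ba sum_setC_sub_sum -opprB sum_setC_sub_sum !splitF.
rewrite (eq_bigr (fun i => spin (i \notin A) * (1/2 + eps * spin (X i)))); last first.
  by move=> i iF; rewrite mu_aE iF.
rewrite [X in - (X + _)](eq_bigr (fun i => spin (i \notin A) * (1/2 + (- eps) * spin (X i)))); last first.
  by move=> i iF; rewrite mu_bE iF mulNr.
have offF (mu : 'I_m -> R) : (forall i, i \notin F -> mu i = 1/2 + gam * spin (X i)) ->
    \sum_(i in ~: F) spin (i \notin A) * mu i
    = \sum_(i in ~: F) spin (i \notin A) * (1/2 + gam * spin (X i)).
  by move=> muE; apply: eq_bigr => i; rewrite inE => /(muE i) ->.
rewrite !sumF !offF; first by rewrite -max_addr_subr mulNr opprD opprK.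
  by move=> i /negbTE iF; rewrite mu_bE iF.
by move=> i /negbTE iF; rewrite mu_aE iF.
Qed.

Lemma opt_envy_le : ~~ odd (m %/ 2) -> 0 <= gam <= 1/2 ->
  opt_envy eps gam X <= eps * (`|\sum_(i in F) spin (X i)| - (m %/ 2)%:R) + 1.
Proof.
move=> half_even /andP[gam_ge0 gam_le].
have cardF : #|F| = (m %/ 2)%N by rewrite card_ord_lt // leq_div.
have F_even : ~~ odd #|F| by rewrite cardF.
have [Q [Q_bal Q_corr]] := exists_balanced_anticorrelated (R := R) _ _ F_even X.
have [|C C_le1] := exists_spin_sum_le1 _ (fun i => 1/2 + gam * spin (X i)) _ (enum_uniq (mem (~: F))).
  by move=> i _; rewrite ler_norml; case: (X i); rewrite /= ?mulr1 ?mulrN1; lra.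
pose A := [set i | if i \in F then i \in Q else i \in C].
have notinA i : (i \notin A) = if i \in F then i \notin Q else i \notin C.
  by rewrite inE; case: ifP.
have onF (f : 'I_m -> bool -> R) :
    \sum_(i in F) f i (i \notin A) = \sum_(i in F) f i (i \notin Q).
  by apply: eq_bigr => i iF; rewrite notinA iF.
apply: le_trans (bigmin_le _ A _) _.
rewrite envy_balanced; last by rewrite (onF (fun=> spin)).
rewrite (onF (fun i b => spin b * spin (X i))) Q_corr cardF lerD2l.
rewrite -big_enum (eq_big_seq (fun i => spin (i \notin C) * (1/2 + gam * spin (X i)))) //.
by move=> i; rewrite mem_enum inE => /negbTE iF; rewrite notinA iF.
Qed.

End Envy.

Lemma prob_unif_predC_le {R : realType} {m} {bad E : pred {ffun 'I_m -> bool}} :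
  (forall X, ~~ bad X -> E X) -> 1 - prob_unif R bad <= prob_unif R E.
Proof.
move=> good; rewrite /prob_unif lerBlDr -mulrDl ler_pdivlMr ?ltr0n ?expn_gt0 //.
rewrite mul1r -natrD ler_nat.
have -> : (2 ^ m)%N = #|{ffun 'I_m -> bool}| by rewrite card_ffun card_bool card_ord.
rewrite -(cardsC [set X | bad X]) [leqRHS]addnC leq_add2l.
by apply: subset_leq_card; apply/fintype.subsetP => X; rewrite !inE => /good.
Qed.

Lemma prob_unif_large_spin_sum_le {R : realType} {m} (F : {set 'I_m}) (s : R) :
  0 <= s -> (0 < #|F|)%N ->
  prob_unif R (fun X => s < `|\sum_(i in F) spin (X i)|)
  <= 2 * expR (- (s ^+ 2 / (2 * #|F|%:R))).
Proof.
move=> s_ge0 F_gt0; rewrite /prob_unif ler_pdivrMr ?ltr0n ?expn_gt0 //.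
apply: le_trans (card_large_spin_sum_le _ _ F _ s_ge0 F_gt0) _.
by rewrite card_ord natrX mulrAC.
Qed.

Theorem lemma22 (R : realType) (m : nat) (delta Delta gam : R) :
  (4 %| m)%N ->
  0 < delta < 1 ->
  0 < Delta < m%:R ->
  0 < gam <= 1/2 ->
  2 * Num.sqrt (ln (2 / delta) * m%:R) <= m%:R / 2 ->
  4 * (Delta + 1) / m%:R <= 1/2 ->
  let eps := 2 * (Delta + 1) / (m%:R - 2 * Num.sqrt (ln (2 / delta) * m%:R)) in
  1 - delta <= prob_unif R (fun X : {ffun 'I_m -> bool} => opt_envy eps gam X <= - Delta).
Proof.
(* The last hypothesis only ensures eps <= 1/2, i.e. nonnegative utilities. *)
move=> m4 /andP[delta_gt0 delta_lt1] /andP[Delta_gt0 Delta_lt_m] /andP[gam_gt0 gam_le] s_le _.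
set L := ln (2 / delta); set s := Num.sqrt (L * m%:R) in s_le *.
cbv zeta; set eps := 2 * (Delta + 1) / _.
set F := [set i : 'I_m | (i < m %/ 2)%N].
have m_gt0 : 0 < m%:R :> R by lra.
have half_even : ~~ odd (m %/ 2).
  by move: m4 => /dvdnP[k ->]; rewrite (_ : 4 = 2 * 2)%N // mulnA mulnK // oddM andbF.
have halfE : (m %/ 2)%:R = m%:R / 2 :> R := natf_div _ (dvdn_trans (isT : (2 %| 4)%N) m4).
have cardF : #|F| = (m %/ 2)%N by rewrite card_ord_lt // leq_div.
have L_gt0 : 0 < L by rewrite ln_gt0 // ltr_pdivlMr // mul1r (lt_trans delta_lt1) ?ltr1n.
have sqr_s : s ^+ 2 = L * m%:R by rewrite sqr_sqrtr // mulr_ge0 // ltW.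
have eps_half : eps * (m%:R / 2 - s) = Delta + 1 by rewrite /eps; field; lra.
pose bad (X : {ffun 'I_m -> bool}) := s < `|\sum_(i in F) spin (X i)|.
have good X : ~~ bad X -> opt_envy eps gam X <= - Delta.
  rewrite -leNgt => S_le.
  apply: le_trans (opt_envy_le _ _ _ _ X half_even _) _; first by rewrite ltW.
  rewrite halfE; nra.
have F_gt0 : (0 < #|F|)%N by rewrite cardF -(@ltr0n R) halfE divr_gt0.
have bad_small : prob_unif R bad <= delta.
  apply: le_trans (prob_unif_large_spin_sum_le F s (sqrtr_ge0 _) F_gt0) _.
  rewrite -/s sqr_s cardF halfE (_ : L * m%:R / (2 * (m%:R / 2)) = L); last by field; lra.
  by rewrite expRN lnK ?posrE ?divr_gt0 // invf_div mulrC divfK.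
apply: le_trans (prob_unif_predC_le good); by rewrite lerD2l lerN2.
Qed.
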